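(* Let $m,n\ge0$ be integers and let $\lambda$ be an almost $(m|n)$-cross bipartition. (i) $|\lambda|=(m+1)(n+1)$. In particular, all almost $(m|n)$-cross bipartitions have the same size. (ii) For any integers $m',n'$ with $0\le m'\le m$ and $0\le n'\le n$, there exists an almost $(m'|n')$-cross bipartition $\mu$ with $\mu\subset\lambda$.
   Context: A partition is a weakly decreasing sequence $\alpha=(\alpha_1,\alpha_2,\dots)$ of nonnegative integers, almost all zero, with size $|\alpha|=\sum_i\alpha_i$. A bipartition is a pair $\lambda=(\lambda^\bullet,\lambda^\circ)$ of partitions, with size $|\lambda|=|\lambda^\bullet|+|\lambda^\circ|$. Containment is componentwise: $\mu\subset\lambda$ iff $\mu^\bullet_i\le\lambda^\bullet_i$ and $\mu^\circ_i\le\lambda^\circ_i$ for all $i$. A bipartition $\lambda$ is $(m|n)$-cross if there exists $k$ with $0\le k\le m$ such that $\lambda^\bullet_{k+1}+\lambda^\circ_{m-k+1}\le n$. It is almost $(m|n)$-cross if it is not $(m|n)$-cross but every bipartition strictly contained in it is $(m|n)$-cross. *)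

From mathcomp Require Import all_boot.
Set Implicit Arguments. Unset Strict Implicit. Unset Printing Implicit Defensive.

(* A partition is represented canonically by the (finite) sequence of its
   nonzero parts, weakly decreasing.  The i-th part (1-indexed) is [pt a i];
   all parts beyond the sequence are 0. *)
Definition is_partition (a : seq nat) : bool :=
  sorted geq a && all (fun x => 0 < x) a.

Definition pt (a : seq nat) (i : nat) : nat := nth 0 a i.-1.

Definition psize (a : seq nat) : nat := sumn a.

(* A bipartition lambda = (lambda^bullet, lambda^circ) = (l.1, l.2). *)
Definition bipartition := (seq nat * seq nat)%type.

Definition is_bipartition (l : bipartition) : bool :=
  is_partition l.1 && is_partition l.2.

Definition bsize (l : bipartition) : nat := psize l.1 + psize l.2.

Definition bcontained (mu l : bipartition) : Prop :=
  forall i, 1 <= i -> pt mu.1 i <= pt l.1 i /\ pt mu.2 i <= pt l.2 i.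

Definition cross (m n : nat) (l : bipartition) : Prop :=
  exists k, k <= m /\ pt l.1 k.+1 + pt l.2 (m - k).+1 <= n.

Definition almost_cross (m n : nat) (l : bipartition) : Prop :=
  ~ cross m n l /\
  forall mu, is_bipartition mu -> bcontained mu l -> mu <> l -> cross m n mu.

From mathcomp Require Import all_boot zify.
From Stdlib Require Import Classical.
Set Implicit Arguments. Unset Strict Implicit. Unset Printing Implicit Defensive.

(* A bipartition is almost (m|n)-cross exactly when its rows vanish beyond
   row m+1 and lambda^bullet_i + lambda^circ_j = n+1 whenever i + j = m+2,
   i.e. lambda^bullet and lambda^circ turned by a half turn tile the
   (m+1) x (n+1) rectangle.  Necessity: removing the last box of a row must
   produce a cross pair through that row, which pins down the sums at the
   corners and, by monotonicity, everywhere.  Part (i) follows by summing over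
   the rectangle; for (ii) cut lambda^bullet down to the (m'+1) x (n'+1)
   rectangle and complete it by its rotated complement, which fits inside
   lambda^circ because n' <= n and m' <= m. *)

Lemma pt_gt0 a i : is_partition a -> 0 < i -> (0 < pt a i) = (i <= size a).
Proof.
move=> /andP[_ a_pos] i_gt0; rewrite /pt.
case: (ltnP i.-1 (size a)) => i_size.
  by rewrite (allP a_pos) ?mem_nth //; lia.
by rewrite nth_default //; lia.
Qed.

Lemma pt_eq0 a i : size a < i -> pt a i = 0.
Proof. by move=> a_i; rewrite /pt nth_default //; lia. Qed.

Lemma pt_nonincreasing a i j : is_partition a -> 0 < i <= j -> pt a j <= pt a i.
Proof.
move=> /andP[a_sorted _] /andP[i_gt0 le_ij]; rewrite /pt.
case: (ltnP j.-1 (size a)) => j_size; last by rewrite nth_default.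
apply: (sorted_leq_nth (rev_trans leq_trans) leqnn 0 a_sorted); rewrite ?inE; lia.
Qed.

Lemma pt_inj a b : is_partition a -> is_partition b ->
  (forall i, 0 < i -> pt a i = pt b i) -> a = b.
Proof.
move=> aP bP eq_ab.
have size_ab : size a = size b.
  have le_size c d : is_partition c -> is_partition d ->
      (forall i, 0 < i -> pt c i = pt d i) -> size c <= size d.
    move=> cP dP eq_cd; case: (posnP (size c)) => [-> // | c_gt0].
    by rewrite -(pt_gt0 dP) // -eq_cd // (pt_gt0 cP).
  by apply/eqP; rewrite eqn_leq !le_size // => i /eq_ab.
by apply: (eq_from_nth (x0 := 0) size_ab) => i _; exact: (eq_ab i.+1).
Qed.

Lemma pt_corner a i : is_partition a -> 0 < i -> 0 < pt a i ->
  exists j, [/\ i <= j, pt a j = pt a i & pt a j.+1 < pt a j].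
Proof.
move=> aP; elim: {i}(size a - i) {-2}i (erefl (size a - i)) => [|d IHd] i.
  move=> d_def i_gt0 ai_gt0.
  have i_size : i <= size a by rewrite -(pt_gt0 aP).
  by exists i; split; rewrite // pt_eq0 //; lia.
move=> d_def i_gt0 ai_gt0.
case: (ltnP (pt a i.+1) (pt a i)) => [corner_i | ge_i]; first by exists i.
have eq_i : pt a i.+1 = pt a i by have := pt_nonincreasing aP (i := i) (j := i.+1); lia.
have [j [le_j eq_j corner_j]] := IHd i.+1 ltac:(lia) isT ltac:(by rewrite eq_i).
by exists j; split; rewrite ?eq_j ?eq_i //; lia.
Qed.

Lemma psize_nth a N : size a <= N -> psize a = \sum_(0 <= i < N) nth 0 a i.
Proof.
move=> a_N; rewrite /psize sumnE (big_nth 0) (big_cat_nat (leq0n _) a_N) /=.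
rewrite [X in _ + X]big_nat_cond [X in _ + X]big1 ?addn0 // => i /andP[/andP[a_i _] _].
exact: nth_default.
Qed.

Lemma nth_filter_gt0 (s : seq nat) j : sorted geq s ->
  nth 0 [seq x <- s | 0 < x] j = nth 0 s j.
Proof.
elim: s j => [|x s IHs] j //= xs_sorted.
case: posnP => [x0 | x_gt0]; last first.
  by case: j => //= j; apply: IHs; exact: path_sorted xs_sorted.
have s0 : s = nseq (size s) 0.
  apply/all_pred1P; apply: sub_all (order_path_min (rev_trans leq_trans) xs_sorted).
  by move=> y; rewrite /= x0 leqn0.
by rewrite s0 filter_nseq x0 nth_nil; case: j => //= j; rewrite nth_nseq if_same.
Qed.

Definition partition_of (f : nat -> nat) (N : nat) : seq nat :=
  [seq x <- map f (iota 1 N) | 0 < x].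

Section PartitionOf.

Variables (f : nat -> nat) (N : nat).
Hypothesis f_nonincreasing : forall i j, 0 < i <= j -> f j <= f i.
Hypothesis f_eq0 : forall i, N < i -> f i = 0.

Let map_sorted : sorted geq (map f (iota 1 N)).
Proof.
apply/(sortedP 0) => i; rewrite size_map size_iota => i_N.
by rewrite !(nth_map 0) ?size_iota ?nth_iota; try lia; apply: f_nonincreasing; lia.
Qed.

Lemma partition_of_partition : is_partition (partition_of f N).
Proof. by rewrite /is_partition filter_all (sorted_filter (rev_trans leq_trans)). Qed.

Lemma pt_partition_of i : 0 < i -> pt (partition_of f N) i = f i.
Proof.
move=> i_gt0; rewrite /pt nth_filter_gt0 //.
case: (ltnP i.-1 N) => i_N.
  by rewrite (nth_map 0) ?size_iota // nth_iota //; congr f; lia.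
by rewrite nth_default ?size_map ?size_iota // f_eq0 //; lia.
Qed.

End PartitionOf.

Lemma partition_remove_box a i : is_partition a -> 0 < i -> pt a i.+1 < pt a i ->
  exists a', is_partition a' /\
    forall j, 0 < j -> pt a' j = if j == i then (pt a i).-1 else pt a j.
Proof.
move=> aP i_gt0 corner_i.
pose f j := if j == i then (pt a i).-1 else pt a j.
have f_nonincreasing p q : 0 < p <= q -> f q <= f p.
  move=> le_pq; rewrite /f; have := pt_nonincreasing aP le_pq.
  case: (eqVneq q i) => [-> | q_i]; case: (eqVneq p i) => [p_i | p_i]; try lia.
  by subst p; have := pt_nonincreasing aP (i := i.+1) (j := q); lia.
have f_eq0 p : size a < p -> f p = 0.
  by rewrite /f; case: eqP => [-> | _] /pt_eq0 ->.
exists (partition_of f (size a)).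
by split; [exact: partition_of_partition | exact: pt_partition_of].
Qed.

Lemma crossP m n l : cross m n l <->
  exists i j, [/\ 0 < i, 0 < j, i + j = m.+2 & pt l.1 i + pt l.2 j <= n].
Proof.
split=> [[k [k_m cross_k]] | [i [j [i_gt0 j_gt0 ij cross_ij]]]].
  by exists k.+1, (m - k).+1; split=> //; lia.
exists i.-1; split; first lia.
by rewrite prednK // (_ : (m - i.-1).+1 = j) //; lia.
Qed.

Lemma not_cross_sum_gt m n l : ~ cross m n l ->
  forall i j, 0 < i -> 0 < j -> i + j = m.+2 -> n < pt l.1 i + pt l.2 j.
Proof.
move=> not_cross i j i_gt0 j_gt0 ij; rewrite ltnNge; apply/negP => cross_ij.
by apply: not_cross; apply/crossP; exists i, j.
Qed.

Lemma cross_swap m n l : cross m n (l.2, l.1) <-> cross m n l.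
Proof.
have swap l' : cross m n (l'.2, l'.1) -> cross m n l'.
  move=> /crossP[i [j [i_gt0 j_gt0 ij cross_ij]]].
  by apply/crossP; exists j, i; split; rewrite // addnC.
by split=> [/swap // | l_cross]; apply: swap; case: l l_cross.
Qed.

Lemma almost_cross_swap m n l : almost_cross m n l -> almost_cross m n (l.2, l.1).
Proof.
move=> [not_cross minimal]; split=> [/cross_swap // | mu muP mu_l mu_ne].
apply/cross_swap; apply: minimal.
- by case/andP: muP => ? ?; apply/andP.
- by move=> i /mu_l [].
- by move=> eq_l; apply: mu_ne; rewrite -eq_l; case: mu {muP mu_l eq_l}.
Qed.

Section AlmostCross.

Variables (m n : nat) (l : bipartition).
Hypotheses (lP : is_bipartition l) (l_almost : almost_cross m n l).

(* Removing the last box of row [i] of [l.1] must create a cross pair of rows,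
   and only a pair involving row [i] can have become one. *)
Lemma almost_cross_corner1 i : 0 < i -> pt l.1 i.+1 < pt l.1 i ->
  i <= m.+1 /\ pt l.1 i + pt l.2 (m.+2 - i) = n.+1.
Proof.
move=> i_gt0 corner_i.
case: l lP l_almost corner_i => a b /andP[/= aP bP] [not_cross minimal] /= corner_i.
have [a' [a'P pt_a']] := partition_remove_box aP i_gt0 corner_i.
have /crossP[i' [j [i'_gt0 j_gt0 ij /= cross_ij]]] : cross m n (a', b).
  apply: minimal; first by rewrite /is_bipartition a'P bP.
    by move=> j j_gt0 /=; rewrite pt_a' //; case: eqP => [-> |]; lia.
  by case=> eq_a'; have := pt_a' i i_gt0; rewrite eq_a' eqxx; lia.
have := not_cross_sum_gt not_cross i'_gt0 j_gt0 ij; move: cross_ij; rewrite pt_a' //=.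
case: eqP => [ii' | _]; last lia.
by subst i'; rewrite (_ : m.+2 - i = j); lia.
Qed.

Lemma almost_cross_row1 i : 0 < i -> 0 < pt l.1 i ->
  i <= m.+1 /\ pt l.1 i + pt l.2 (m.+2 - i) <= n.+1.
Proof.
move=> i_gt0 row_i; have /andP[aP bP] := lP.
have [j [le_ij <- corner_j]] := pt_corner aP i_gt0 row_i.
have [j_m sum_j] := almost_cross_corner1 (leq_trans i_gt0 le_ij) corner_j.
have := pt_nonincreasing bP (i := m.+2 - j) (j := m.+2 - i); lia.
Qed.

End AlmostCross.

Lemma almost_cross_row2 m n l i : is_bipartition l -> almost_cross m n l ->
  0 < i -> 0 < pt l.2 i -> i <= m.+1 /\ pt l.2 i + pt l.1 (m.+2 - i) <= n.+1.
Proof.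
move=> /andP[aP bP] /almost_cross_swap l_almost.
by apply: (almost_cross_row1 (l := (l.2, l.1))) => //; apply/andP.
Qed.

(* [l.1] and [l.2], the latter rotated by a half turn, tile the
   [(m+1) x (n+1)] rectangle. *)
Definition rect_complement (m n : nat) (l : bipartition) : Prop :=
  (forall i, m.+1 < i -> pt l.1 i = 0 /\ pt l.2 i = 0) /\
  forall i j, 0 < i -> 0 < j -> i + j = m.+2 -> pt l.1 i + pt l.2 j = n.+1.

Lemma rect_complement_swap m n l :
  rect_complement m n l -> rect_complement m n (l.2, l.1).
Proof.
move=> [l_eq0 l_sum]; split=> [i /l_eq0 [] // | i j i_gt0 j_gt0 ij /=].
by rewrite addnC l_sum // addnC.
Qed.

Lemma almost_cross_rect_complement m n l :
  is_bipartition l -> almost_cross m n l -> rect_complement m n l.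
Proof.
move=> lP l_almost.
have row1 := almost_cross_row1 lP l_almost; have row2 := almost_cross_row2 lP l_almost.
split=> [i i_m | i j i_gt0 j_gt0 ij].
  have i_gt0 : 0 < i by lia.
  split; [case: (posnP (pt l.1 i)) => // /(row1 _ i_gt0) [] |
          case: (posnP (pt l.2 i)) => // /(row2 _ i_gt0) []]; lia.
have := not_cross_sum_gt l_almost.1 i_gt0 j_gt0 ij.
have -> : j = m.+2 - i by lia.
case: (posnP (pt l.1 i)) => [row_i0 | /(row1 _ i_gt0) []]; last lia.
by have := row2 (m.+2 - i); rewrite (_ : m.+2 - (m.+2 - i) = i); lia.
Qed.

Lemma rect_complement_sub_eq1 m n l mu : rect_complement m n l -> bcontained mu l ->
  ~ cross m n mu -> forall i, 0 < i -> pt mu.1 i = pt l.1 i.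
Proof.
move=> [l_eq0 l_sum] mu_l not_cross i i_gt0; have [le1 _] := mu_l i i_gt0.
case: (ltnP m.+1 i) => i_m; first by move: le1; rewrite (l_eq0 i i_m).1; lia.
have j_gt0 : 0 < m.+2 - i by lia.
have [_ le2] := mu_l (m.+2 - i) j_gt0.
have := not_cross_sum_gt not_cross i_gt0 j_gt0 (subnKC (leqW i_m)).
have := l_sum i (m.+2 - i) i_gt0 j_gt0 (subnKC (leqW i_m)); lia.
Qed.

Lemma rect_complement_almost_cross m n l :
  is_bipartition l -> rect_complement m n l -> almost_cross m n l.
Proof.
move=> /andP[aP bP] l_rect; split.
  by move=> /crossP[i [j [i_gt0 j_gt0 ij]]]; rewrite l_rect.2 //; lia.
move=> mu /andP[mu1P mu2P] mu_l mu_ne; apply: NNPP => not_cross; apply: mu_ne.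
have eq1 := rect_complement_sub_eq1 l_rect mu_l not_cross.
have swap_mu_l : bcontained (mu.2, mu.1) (l.2, l.1).
  by move=> i /mu_l [le1 le2].
have eq2 := rect_complement_sub_eq1 (rect_complement_swap l_rect) swap_mu_l
  (fun swap_cross => not_cross (proj1 (cross_swap _ _ _) swap_cross)).
by case: mu l eq1 eq2 mu1P mu2P aP bP {mu_l swap_mu_l not_cross l_rect}
  => [c d] [a b] /= eq1 eq2 cP dP aP bP; rewrite (pt_inj cP aP eq1) (pt_inj dP bP eq2).
Qed.

Lemma bsize_rect_complement m n l :
  is_bipartition l -> rect_complement m n l -> bsize l = (m + 1) * (n + 1).
Proof.
move=> /andP[aP bP] [l_eq0 l_sum].
have size_le c : is_partition c -> (forall i, m.+1 < i -> pt c i = 0) -> size c <= m.+1.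
  move=> cP c_eq0; rewrite leqNgt; apply/negP => c_size.
  by have := pt_gt0 cP (i := size c); rewrite leqnn c_eq0; lia.
have size1 : size l.1 <= m.+1 by apply: size_le aP _ => i /l_eq0 [].
have size2 : size l.2 <= m.+1 by apply: size_le bP _ => i /l_eq0 [].
rewrite /bsize (psize_nth size1) (psize_nth size2).
rewrite [X in _ + X]big_nat_rev -big_split /=.
rewrite big_nat_cond (eq_bigr (fun => n.+1)) -?big_nat_cond ?sum_nat_const_nat; first lia.
move=> i /andP[/andP[_ i_m] _]; have := l_sum i.+1 (m - i).+1 isT isT.
by rewrite /pt /= add0n subSS; apply; lia.
Qed.

Definition cut_row (m n : nat) (a : seq nat) (i : nat) : nat :=
  if i <= m.+1 then minn (pt a i) n.+1 else 0.

Definition complement_row (m n : nat) (a : seq nat) (j : nat) : nat :=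
  if j <= m.+1 then n.+1 - cut_row m n a (m.+2 - j) else 0.

Definition almost_cross_of (m n : nat) (a : seq nat) : bipartition :=
  (partition_of (cut_row m n a) m.+1, partition_of (complement_row m n a) m.+1).

Section AlmostCrossOf.

Variables (m n : nat) (a : seq nat).
Hypothesis aP : is_partition a.

Let cut_row_nonincreasing i j : 0 < i <= j -> cut_row m n a j <= cut_row m n a i.
Proof.
move=> le_ij; rewrite /cut_row; have := pt_nonincreasing aP le_ij.
by do 2 case: ifP; lia.
Qed.

Let complement_row_nonincreasing i j :
  0 < i <= j -> complement_row m n a j <= complement_row m n a i.
Proof.
move=> le_ij; rewrite /complement_row; case: ifP => j_m; case: ifP => i_m; try lia.
by have := cut_row_nonincreasing (i := m.+2 - j) (j := m.+2 - i); lia.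
Qed.

Let cut_row_eq0 i : m.+1 < i -> cut_row m n a i = 0.
Proof. by rewrite /cut_row; case: ifP; lia. Qed.

Let complement_row_eq0 i : m.+1 < i -> complement_row m n a i = 0.
Proof. by rewrite /complement_row; case: ifP; lia. Qed.

Lemma almost_cross_of_bipartition : is_bipartition (almost_cross_of m n a).
Proof. by apply/andP; split; apply: partition_of_partition. Qed.

Lemma pt_almost_cross_of1 i : 0 < i -> pt (almost_cross_of m n a).1 i = cut_row m n a i.
Proof. exact: pt_partition_of. Qed.

Lemma pt_almost_cross_of2 i :
  0 < i -> pt (almost_cross_of m n a).2 i = complement_row m n a i.
Proof. exact: pt_partition_of. Qed.

Lemma almost_cross_of_rect : rect_complement m n (almost_cross_of m n a).
Proof.
split=> [i i_m | i j i_gt0 j_gt0 ij].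
  have i_gt0 : 0 < i by lia.
  rewrite pt_almost_cross_of1 // pt_almost_cross_of2 //.
  by rewrite cut_row_eq0 ?complement_row_eq0.
rewrite pt_almost_cross_of1 // pt_almost_cross_of2 // /complement_row /cut_row.
rewrite (_ : m.+2 - j = i); last lia.
by do 2 case: ifP; lia.
Qed.

End AlmostCrossOf.

Lemma almost_cross_of_sub m n l m' n' : is_bipartition l -> rect_complement m n l ->
  m' <= m -> n' <= n -> bcontained (almost_cross_of m' n' l.1) l.
Proof.
move=> /andP[aP bP] [_ l_sum] m'_m n'_n i i_gt0.
rewrite pt_almost_cross_of1 // pt_almost_cross_of2 // /complement_row /cut_row.
split; first by case: ifP; lia.
case: ifP => i_m'; last lia.
have := l_sum (m'.+2 - i) (m - m' + i) ltac:(lia) ltac:(lia) ltac:(lia).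
have := pt_nonincreasing bP (i := i) (j := m - m' + i) ltac:(lia).
by rewrite ifT; lia.
Qed.

Theorem proposition2p6 (m n : nat) (l : bipartition) :
  is_bipartition l -> almost_cross m n l ->
  bsize l = (m + 1) * (n + 1) /\
  (forall m' n', m' <= m -> n' <= n ->
     exists mu, is_bipartition mu /\ bcontained mu l /\ almost_cross m' n' mu).
Proof.
move=> lP l_almost; have l_rect := almost_cross_rect_complement lP l_almost.
split=> [|m' n' m'_m n'_n]; first exact: bsize_rect_complement.
have l1P : is_partition l.1 by case/andP: lP.
have muP := almost_cross_of_bipartition m' n' l1P.
exists (almost_cross_of m' n' l.1); split=> //; split.
  exact: almost_cross_of_sub lP l_rect m'_m n'_n.
exact: rect_complement_almost_cross muP (almost_cross_of_rect m' n' l1P).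
Qed.
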